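(* Let $G=K^{n_{1},n_{2},\ldots,n_{k}}_{n}$ where $k\geq 2$, $n_i\ge1$ and $n=\sum_{i=1}^{k}n_{i}+1$. Then the distance characteristic polynomial of $G$ is $$P_{D}(\lambda)=\det(\lambda I-D(G))=(\lambda+1)^{n-k-1}\Big(\lambda-\sum_{i=1}^{k}\frac{n_{i}(2\lambda+1)}{\lambda+n_{i}+1}\Big)\prod_{i=1}^{k}(\lambda+n_{i}+1).$$
   Context: $D(G)$ is the distance matrix of $G$. $K^{n_{1},\ldots,n_{k}}_{n}$ denotes the graph on $n$ vertices having a vertex $v$ of degree $n-1$ such that $G-v$ is the disjoint union of complete graphs $K_{n_1},\dots,K_{n_k}$. *)

From HB Require Import structures.
From mathcomp Require Import all_boot all_order all_algebra.
Set Implicit Arguments. Unset Strict Implicit. Unset Printing Implicit Defensive.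
Import Order.TTheory GRing.Theory Num.Theory.

Fixpoint within (T : finType) (e : rel T) (m : nat) (x y : T) : bool :=
  match m with
  | 0 => x == y
  | m'.+1 => within e m' x y || [exists z, within e m' x z && e z y]
  end.

(* Graph distance: least m such that y is reachable from x in at most m
   steps (for connected graphs this is the usual shortest-path distance;
   every shortest walk has length < #|T|). *)
Definition gdist (T : finType) (e : rel T) (x y : T) : nat :=
  find (fun m => within e m x y) (iota 0 #|T|).

Definition distmx (R : nzRingType) (n : nat) (e : rel 'I_n) : 'M[R]_n :=
  \matrix_(i, j) ((gdist e i j)%:R)%R.

(* G is (isomorphic to) K_n^{n_1,...,n_k}: a simple graph on n vertices
   having a vertex v of degree n-1 such that G - v is the disjoint union of
   complete graphs K_{n_1}, ..., K_{n_k}; the component of a vertex x != v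
   is c x, and component i has exactly n_i vertices. *)
Definition is_K_graph (n k : nat) (ns : 'I_k -> nat) (e : rel 'I_n) : Prop :=
  [/\ symmetric e, irreflexive e &
   exists (v : 'I_n) (c : 'I_n -> 'I_k),
     [/\ #|[set y | e v y]| = n.-1,
         forall i : 'I_k, #|[set x | (x != v) && (c x == i)]| = ns i &
         forall x y : 'I_n, x != v -> y != v -> x != y ->
           e x y = (c x == c y)]].

From HB Require Import structures.
From mathcomp Require Import all_boot all_order all_algebra.
From mathcomp Require Import ring.
Set Implicit Arguments.
Unset Strict Implicit.
Unset Printing Implicit Defensive.

Import Order.TTheory GRing.Theory Num.Theory.
Local Open Scope ring_scope.

(* D(G) + I is constant on the blocks of the partition {v}, V(K_{n_1}), ...,
   V(K_{n_k}), so lam I - D(G) = a I - P Q P^T with a = lam + 1, P the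
   n x (k+1) class-indicator matrix and Q the quotient matrix.  Sylvester's determinant identity turns
   its determinant into a^(n-k-1) det (a I - Q P^T P), a (k+1) x (k+1)
   determinant; there Q is a diagonal matrix plus a rank-two matrix, and the
   matrix determinant lemma leaves a 2 x 2 determinant.  The denominators
   lam + 1 and lam + n_i + 1 are removed by comparing both sides as
   polynomials at the natural numbers. *)

Section Determinants.
Variable R : comNzRingType.

Lemma det_scalar_sub_mulmxC p q (A : 'M[R]_(p, q)) (B : 'M[R]_(q, p)) (a : R) :
  a ^+ q * \det (a%:M - A *m B) = a ^+ p * \det (a%:M - B *m A).
Proof.
pose X := block_mx (a%:M) A B (1%:M : 'M[R]_q).
have XL : X *m block_mx 1%:M 0 (- B) 1%:M = block_mx (a%:M - A *m B) A 0 1%:M.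
  by rewrite mulmx_block !mulmx1 !mulmx0 mul1mx mulmxN !add0r subrr.
have LX : block_mx 1%:M 0 (- B) (a%:M) *m X = block_mx (a%:M) A 0 (a%:M - B *m A).
  rewrite mulmx_block !mul1mx !mul0mx !addr0 mulmx1 mulNmx mul_mx_scalar.
  by rewrite mul_scalar_mx addNr addrC mulNmx.
have := congr1 determinant XL; have := congr1 determinant LX.
rewrite !det_mulmx !det_lblock !det_ublock !det1 !det_scalar !mulr1 mul1r.
by move=> <- <-.
Qed.

Lemma det_mx22 (M : 'M[R]_2) : \det M = M 0 0 * M 1 1 - M 0 1 * M 1 0.
Proof.
rewrite (expand_det_row _ 0) !big_ord_recl big_ord0 addr0 /cofactor !det_mx11.
have l00 : lift (0 : 'I_2) (0 : 'I_1) = 1 by apply/val_inj.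
have l10 : lift (1 : 'I_2) (0 : 'I_1) = 0 by apply/val_inj.
by rewrite !mxE /= l00 l10 expr0 expr1 !mul1r mulN1r mulrN.
Qed.

End Determinants.

Lemma det_diag_sub_mulmx (F : fieldType) m p (d : 'rV[F]_m)
    (U : 'M[F]_(m, p)) (W : 'M[F]_(p, m)) :
  (forall s, d 0 s != 0) ->
  \det (diag_mx d - U *m W)
    = (\prod_s d 0 s) * \det (1%:M - W *m (diag_mx (\row_s (d 0 s)^-1) *m U)).
Proof.
move=> d_neq0; set Di := diag_mx (\row_s _).
have dDi : diag_mx d *m Di = 1%:M.
  by apply/matrixP => s t; rewrite mulmx_diag !mxE divff.
have -> : diag_mx d - U *m W = diag_mx d *m (1%:M - (Di *m U) *m W).
  by rewrite mulmxBr mulmx1 !mulmxA dDi mul1mx.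
rewrite det_mulmx det_diag; congr (_ * _).
by have := det_scalar_sub_mulmxC (Di *m U) W 1; rewrite !expr1n !mul1r.
Qed.

Lemma horner_char_poly (R : comNzRingType) n (A : 'M[R]_n) (x : R) :
  (char_poly A).[x] = \det (x%:M - A).
Proof.
rewrite /char_poly -horner_evalE -det_map_mx; congr (\det _).
apply/matrixP => i j; rewrite !mxE /horner_eval.
change ((('X *+ (i == j) - (A i j)%:P).[x]) = x *+ (i == j) - A i j).
by rewrite hornerD hornerN hornerMn hornerX hornerC.
Qed.

Lemma poly_eq_nat (R : numFieldType) (p q : {poly R}) :
  (forall m : nat, p.[m%:R] = q.[m%:R]) -> p = q.
Proof.
move=> eq_pq; apply/eqP; rewrite -subr_eq0; apply/eqP.
apply: (@roots_geq_poly_eq0 _ _ [seq (m%:R : R) | m <- iota 0 (size (p - q))]).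
- by apply/allP => _ /mapP[m _ ->]; rewrite /root !hornerE eq_pq subrr.
- by rewrite map_inj_uniq ?iota_uniq // => i j /eqP; rewrite eqr_nat => /eqP.
- by rewrite size_map size_iota.
Qed.

Section ClassMatrices.
Variables (R : nzRingType) (n m : nat) (cl : 'I_n -> 'I_m).

Definition class_mx : 'M[R]_(n, m) := \matrix_(x, s) (cl x == s)%:R.
Definition inflate_mx (C : 'M[R]_m) : 'M[R]_n := \matrix_(x, y) C (cl x) (cl y).
Definition class_sizes : 'rV[R]_m := \row_s #|[set x | cl x == s]|%:R.

Lemma mul_class_mx p (M : 'M[R]_(m, p)) :
  class_mx *m M = \matrix_(x, t) M (cl x) t.
Proof.
apply/matrixP => x t; rewrite !mxE (bigD1 (cl x)) //= big1 => [|s s_neq].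
  by rewrite !mxE eqxx mul1r addr0.
by rewrite !mxE eq_sym (negbTE s_neq) mul0r.
Qed.

Lemma mulmx_tr_class_mx p (M : 'M[R]_(p, m)) :
  M *m class_mx^T = \matrix_(t, x) M t (cl x).
Proof.
apply/matrixP => t x; rewrite !mxE (bigD1 (cl x)) //= big1 => [|s s_neq].
  by rewrite !mxE eqxx mulr1 addr0.
by rewrite !mxE eq_sym (negbTE s_neq) mulr0.
Qed.

Lemma inflate_mxE C : inflate_mx C = class_mx *m (C *m class_mx^T).
Proof. by rewrite mulmx_tr_class_mx mul_class_mx; apply/matrixP => x y; rewrite !mxE. Qed.

Lemma mul_tr_class_mx : class_mx^T *m class_mx = diag_mx class_sizes.
Proof.
apply/matrixP => s t; rewrite !mxE.
rewrite (eq_bigr (fun x => if (cl x == s) && (cl x == t) then 1 else 0)); last first.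
  by move=> x _; rewrite !mxE -natrM mulnb; case: (_ && _).
rewrite -big_mkcond sumr_const; case: eqVneq => [<-|s_neq_t].
  by congr _%:R; apply: eq_card => x; rewrite inE -topredE /= andbb.
rewrite mulr0n eq_card0 // => x; rewrite -topredE /=.
by apply: contraNF s_neq_t => /andP[/eqP <-].
Qed.
End ClassMatrices.

Arguments class_mx {R n m} cl.
Arguments inflate_mx {R n m} cl C.
Arguments class_sizes {R n m} cl.

Lemma det_scalar_sub_inflate (F : idomainType) n m (cl : 'I_n -> 'I_m)
    (C : 'M[F]_m) (a : F) :
  a != 0 -> (m <= n)%N ->
  \det (a%:M - inflate_mx cl C)
    = a ^+ (n - m) * \det (a%:M - C *m diag_mx (class_sizes cl)).
Proof.
move=> a_neq0 le_mn; apply: (mulfI (expf_neq0 m a_neq0)).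
rewrite inflate_mxE det_scalar_sub_mulmxC -mulmxA mul_tr_class_mx.
by rewrite mulrA -exprD subnKC.
Qed.

(* The value of D(G) + I between vertex classes s and t; class [ord0] is {v}. *)
Definition star_quotient_mx (R : nzRingType) k : 'M[R]_k.+1 :=
  \matrix_(s, t) (if [|| s == t, s == ord0 | t == ord0] then 1 else 2).

Lemma det_star_quotient (F : fieldType) k (sz : 'rV[F]_k.+1) (a : F) :
  a != 0 -> (forall i : 'I_k, a + sz 0 (lift ord0 i) != 0) ->
  let beta := \sum_(i < k) sz 0 (lift ord0 i) / (a + sz 0 (lift ord0 i)) in
  \det (a%:M - star_quotient_mx F k *m diag_mx sz)
    = a * \prod_(i < k) (a + sz 0 (lift ord0 i))
      * ((1 - sz 0 ord0 / a - beta) * (1 - beta) - beta ^+ 2).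
Proof.
move=> a_neq0 lift_neq0 beta.
(* Q = Y Y^T - diag [s != 0]. *)
pose Y : 'M[F]_(k.+1, 2) := \matrix_(s, u) ((u == 0) || (s != ord0))%:R.
pose d : 'rV[F]_k.+1 := \row_s (a + (s != ord0)%:R * sz 0 s).
have dE (i : 'I_k) : d 0 (lift ord0 i) = a + sz 0 (lift ord0 i).
  by rewrite mxE eq_sym (negbTE (neq_lift _ _)) mul1r.
have d0 : d 0 ord0 = a by rewrite mxE eqxx mul0r addr0.
have d_neq0 s : d 0 s != 0 by case: (unliftP ord0 s) => [i ->|->]; rewrite ?dE ?d0.
have -> : a%:M - star_quotient_mx F k *m diag_mx sz
          = diag_mx d - Y *m (Y^T *m diag_mx sz).
  apply/matrixP => s t; rewrite mulmxA !mul_mx_diag !mxE !big_ord_recl big_ord0.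
  rewrite !mxE /=.
  case: (eqVneq s t) => [<-|s_neq_t].
    by case: (s != ord0); rewrite ?orbT ?orbF /=; ring.
  rewrite !mulr0n !sub0r; congr (- (_ * _)).
  by case: (s == ord0); case: (t == ord0) => /=; ring.
rewrite det_diag_sub_mulmx // det_mx22 big_ord_recl d0.
under eq_bigr => i _ do rewrite dE.
have NE (u w : 'I_2) :
    (Y^T *m diag_mx sz *m (diag_mx (\row_s (d 0 s)^-1) *m Y)) u w
    = ((u == 0) && (w == 0))%:R * (sz 0 ord0 / a) + beta.
  rewrite mul_mx_diag mul_diag_mx !mxE big_ord_recl !mxE /=.
  congr (_ + _).
    by rewrite mul0r addr0 !orbF; case: (u == 0); case: (w == 0) => /=; ring.
  apply: eq_bigr => i _; rewrite !mxE.
  have -> : (lift ord0 i != ord0) = true by rewrite eq_sym neq_lift.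
  by rewrite !orbT !mul1r mulr1.
rewrite ![(1%:M - _) _ _]mxE ![(- _ : 'M_2) _ _]mxE !NE !mxE /=; ring.
Qed.

Lemma gdist_le2 (T : finType) (e : rel T) (x y : T) :
  (2 < #|T|)%N -> [|| x == y, e x y | [exists z, e x z && e z y]] ->
  gdist e x y = if x == y then 0%N else if e x y then 1%N else 2%N.
Proof.
move=> T_gt2 path2; rewrite /gdist -(subnKC T_gt2) iotaD /=.
have step1 z : [exists z', (x == z') && e z' z] = e x z.
  by apply/existsP/idP => [[z' /andP[/eqP <-]] //|]; exists x; rewrite eqxx.
rewrite step1; case: (x =P y) path2 => //= _; case: (e x y) => //=.
move=> /existsP[z /andP[exz ezy]].
by rewrite ifT //; apply/existsP; exists z; rewrite step1 exz ezy orbT.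
Qed.

Section KGraph.
Variables (n k : nat) (ns : 'I_k -> nat) (e : rel 'I_n) (v : 'I_n) (c : 'I_n -> 'I_k).
Hypotheses (e_sym : symmetric e) (e_irr : irreflexive e)
  (deg_v : #|[set y | e v y]| = n.-1)
  (card_comp : forall i, #|[set x | (x != v) && (c x == i)]| = ns i)
  (e_comp : forall x y, x != v -> y != v -> x != y -> e x y = (c x == c y)).

Lemma center_adj y : y != v -> e v y.
Proof.
have sub : [set y | e v y] \subset [set~ v].
  by apply/subsetP => z; rewrite !inE; apply: contraTneq => ->; rewrite e_irr.
have : [set y | e v y] == [set~ v] by rewrite eqEcard sub cardsC1 deg_v card_ord leqnn.
by move=> /eqP/setP/(_ y); rewrite !inE => ->.
Qed.

Definition kclass x : 'I_k.+1 := if x == v then ord0 else lift ord0 (c x).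

Lemma kclass_eq0 x : (kclass x == ord0) = (x == v).
Proof.
rewrite /kclass; case: (x == v); first by rewrite eqxx.
by rewrite eq_sym (negbTE (neq_lift _ _)).
Qed.

Lemma gdist_K x y : (2 < n)%N ->
  gdist e x y = if x == y then 0%N
                else if [|| x == v, y == v | c x == c y] then 1%N else 2%N.
Proof.
move=> n_gt2.
have e_K : e x y = (x != y) && [|| x == v, y == v | c x == c y].
  case: (eqVneq x y) => [<-|x_neq_y]; first by rewrite e_irr.
  case: (eqVneq x v) x_neq_y => [-> y_neq_v|x_neq_v x_neq_y].
    by rewrite center_adj // eq_sym.
  case: (eqVneq y v) => [->|y_neq_v]; first by rewrite e_sym center_adj.
  by rewrite e_comp.
rewrite gdist_le2 ?card_ord //; first by rewrite e_K; case: (x == y).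
case: (eqVneq x v) => [->|x_neq_v].
  by case: (eqVneq y v) => [->|/center_adj ->]; rewrite ?eqxx ?orbT.
case: (eqVneq y v) => [->|y_neq_v]; first by rewrite e_sym center_adj ?orbT.
by apply/orP; right; apply/orP; right; apply/existsP; exists v; rewrite e_sym !center_adj.
Qed.

Lemma distmx_K (R : nzRingType) : (2 < n)%N ->
  distmx R e = inflate_mx kclass (star_quotient_mx R k) - 1%:M.
Proof.
move=> n_gt2; apply/matrixP => x y; rewrite !mxE gdist_K // !kclass_eq0.
have kclass_lift : forall x y, x != v -> y != v -> (kclass x == kclass y) = (c x == c y).
  by move=> x' y' /negbTE x'v /negbTE y'v; rewrite /kclass x'v y'v (inj_eq lift_inj).
case: (eqVneq x y) => [<-|x_neq_y]; first by rewrite eqxx subrr.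
rewrite subr0; case: (eqVneq x v) => [_|x_neq_v] /=; first by rewrite orbT.
case: (eqVneq y v) => [_|y_neq_v] /=; first by rewrite orbT.
by rewrite kclass_lift // orbF; case: (c x == c y).
Qed.

Lemma class_sizes_center (R : nzRingType) : class_sizes kclass 0 ord0 = 1 :> R.
Proof.
by rewrite mxE (_ : #|_| = 1%N) // -(cards1 v); apply: eq_card => x; rewrite !inE kclass_eq0.
Qed.

Lemma class_sizes_lift (R : nzRingType) i :
  class_sizes kclass 0 (lift ord0 i) = (ns i)%:R :> R.
Proof.
rewrite mxE -card_comp; congr _%:R; apply: eq_card => x; rewrite !inE /kclass.
by case: (x == v); rewrite /= ?(inj_eq lift_inj) // eq_sym (negbTE (neq_lift _ _)).
Qed.

Lemma horner_char_poly_K (F : fieldType) (lam : F) :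
  (2 < n)%N -> (k < n)%N -> lam + 1 != 0 -> (forall i, lam + (ns i)%:R + 1 != 0) ->
  (char_poly (distmx F e)).[lam] =
    (lam + 1) ^+ (n - k - 1)
    * (lam - \sum_(i < k) ((ns i)%:R * (2 * lam + 1) / (lam + (ns i)%:R + 1)))
    * \prod_(i < k) (lam + (ns i)%:R + 1).
Proof.
move=> n_gt2 k_lt_n lam1_neq0 lam_ns_neq0; rewrite horner_char_poly.
have -> : lam%:M - distmx F e
          = (lam + 1)%:M - inflate_mx kclass (star_quotient_mx F k).
  by rewrite distmx_K // opprB addrCA raddfD addrA [_ + 1%:M]addrC.
rewrite det_scalar_sub_inflate // det_star_quotient //; last first.
  by move=> i; rewrite class_sizes_lift addrAC.
rewrite class_sizes_center subnS subn1.
set cs := class_sizes kclass.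
have -> : \prod_(i < k) (lam + 1 + cs 0 (lift ord0 i))
          = \prod_(i < k) (lam + (ns i)%:R + 1).
  by apply: eq_bigr => i _; rewrite class_sizes_lift addrAC.
have -> : \sum_(i < k) cs 0 (lift ord0 i) / (lam + 1 + cs 0 (lift ord0 i))
          = \sum_(i < k) (ns i)%:R / (lam + (ns i)%:R + 1).
  by apply: eq_bigr => i _; rewrite class_sizes_lift addrAC.
have -> : \sum_(i < k) (ns i)%:R * (2 * lam + 1) / (lam + (ns i)%:R + 1)
          = (2 * lam + 1) * \sum_(i < k) (ns i)%:R / (lam + (ns i)%:R + 1).
  by rewrite mulr_sumr; apply: eq_bigr => i _; rewrite mulrCA mulrA.
set beta := \sum_(i < k) _; set P := \prod_(i < k) _.
by field.
Qed.

End KGraph.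

Definition K_char_poly (R : nzRingType) n k (ns : 'I_k -> nat) : {poly R} :=
  ('X + 1) ^+ (n - k - 1) *
  ('X * \prod_(i < k) ('X + ((ns i)%:R + 1)%:P)
   - (2 * 'X + 1) * \sum_(i < k) (ns i)%:R%:P
                     * \prod_(j < k | j != i) ('X + ((ns j)%:R + 1)%:P)).

Lemma horner_K_char_poly (F : fieldType) n k (ns : 'I_k -> nat) (lam : F) :
  (forall i, lam + (ns i)%:R + 1 != 0) ->
  (K_char_poly F n ns).[lam] =
    (lam + 1) ^+ (n - k - 1)
    * (lam - \sum_(i < k) ((ns i)%:R * (2 * lam + 1) / (lam + (ns i)%:R + 1)))
    * \prod_(i < k) (lam + (ns i)%:R + 1).
Proof.
move=> lam_ns_neq0.
have horner_factors (P : pred 'I_k) :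
    (\prod_(i < k | P i) ('X + ((ns i)%:R + 1)%:P)).[lam]
    = \prod_(i < k | P i) (lam + (ns i)%:R + 1).
  by rewrite horner_prod; apply: eq_bigr => i _; rewrite !hornerE.
rewrite /K_char_poly !hornerE horner_sum -[RHS]mulrA; congr (_ * _).
rewrite mulrBl horner_factors; congr (_ - _).
rewrite mulr_sumr mulr_suml; apply: eq_bigr => i _.
rewrite hornerM hornerC horner_factors [in RHS](bigD1 i) //= [in RHS]mulrA divfK //.
by ring.
Qed.

Theorem lemma3p4 (R : numFieldType) (n k : nat) (ns : 'I_k -> nat)
    (e : rel 'I_n) (lam : R) :
  (2 <= k)%N ->
  (forall i, (0 < ns i)%N) ->
  n = ((\sum_(i < k) ns i).+1)%N ->
  is_K_graph ns e ->
  (forall i, lam + (ns i)%:R + 1 != 0) ->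
  (char_poly (distmx R e)).[lam] =
    (lam + 1) ^+ (n - k - 1)
    * (lam - \sum_(i < k) ((ns i)%:R * (2 * lam + 1) / (lam + (ns i)%:R + 1)))
    * \prod_(i < k) (lam + (ns i)%:R + 1).
Proof.
move=> k_ge2 ns_gt0 n_def [e_sym e_irr [v [c [deg_v card_comp e_comp]]]] lam_ns_neq0.
have k_le_sum : (k <= \sum_(i < k) ns i)%N.
  rewrite -[k in (k <= _)%N]card_ord -sum1_card.
  by apply: leq_sum => i _; apply: ns_gt0.
have k_lt_n : (k < n)%N by rewrite n_def ltnS.
have n_gt2 : (2 < n)%N by rewrite n_def ltnS (leq_trans k_ge2).
suff -> : char_poly (distmx R e) = K_char_poly R n ns by exact: horner_K_char_poly.
apply: poly_eq_nat => m.
have m_ns_neq0 i : (m%:R + (ns i)%:R + 1 : R) != 0 by rewrite -natrD natr1 pnatr_eq0.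
rewrite horner_K_char_poly // (horner_char_poly_K e_sym e_irr deg_v card_comp e_comp) //.
by rewrite natr1 pnatr_eq0.
Qed.
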